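(* Let $P$ be a set of $n\geq 5$ points in general position in the plane. Then $\operatorname{diam}(D(P))\in\{2,3,4\}$ if $n=5$, $\operatorname{diam}(D(P))\in\{2,3\}$ if $n\in\{6,7,8\}$, and $\operatorname{diam}(D(P))=2$ if $n\geq 9$.
   Context: A set of points in the plane is in general position if no three of its points are collinear. The disjointness graph of segments $D(P)$ of $P$ is the graph whose vertices are all $\binom{n}{2}$ closed straight-line segments with both endpoints in $P$, two such segments being adjacent if and only if they are disjoint. The diameter $\operatorname{diam}(G)$ of a connected graph $G$ is the largest distance (length of a shortest path) between two vertices of $G$. *)

From mathcomp Require Import all_boot all_order all_algebra.
From mathcomp Require Import reals.
Set Implicit Arguments. Unset Strict Implicit. Unset Printing Implicit Defensive.
Import Order.TTheory GRing.Theory Num.Theory.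
Local Open Scope ring_scope.

Section Disj.
Variables (R : realType) (n : nat) (p : 'I_n -> R * R).

Definition on_closed_segment (a b x : R * R) : Prop :=
  exists t : R, 0 <= t /\ t <= 1 /\
    x.1 = (1 - t) * a.1 + t * b.1 /\ x.2 = (1 - t) * a.2 + t * b.2.

Definition det3 (a b c : R * R) : R :=
  (b.1 - a.1) * (c.2 - a.2) - (b.2 - a.2) * (c.1 - a.1).

Definition general_position : Prop :=
  forall i j k : 'I_n, i != j -> j != k -> i != k -> det3 (p i) (p j) (p k) != 0.

(* Vertices of D(P): segments with both endpoints in P, encoded by the
   2-element set of endpoint indices. *)
Definition is_segment (S : {set 'I_n}) : Prop := #|S| = 2%N.

Definition on_seg (S : {set 'I_n}) (x : R * R) : Prop :=
  exists i j : 'I_n, S = [set i; j] /\ on_closed_segment (p i) (p j) x.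

(* Adjacency in D(P): two segments that are disjoint closed sets. *)
Definition disj_adj (S T : {set 'I_n}) : Prop :=
  is_segment S /\ is_segment T /\ ~ (exists x, on_seg S x /\ on_seg T x).

End Disj.

Inductive walk (T : Type) (A : T -> T -> Prop) : T -> T -> nat -> Prop :=
| walk_nil x : walk A x x 0
| walk_cons x y z k : A x y -> walk A y z k -> walk A x z k.+1.

Definition dist_le (T : Type) (A : T -> T -> Prop) (u v : T) (k : nat) : Prop :=
  exists2 m, (m <= k)%N & walk A u v m.

Definition is_diameter (T : Type) (V : T -> Prop) (A : T -> T -> Prop) (d : nat) : Prop :=
  (forall u v, V u -> V v -> dist_le A u v d) /\
  (exists u v, V u /\ V v /\ ~ dist_le A u v d.-1).

From mathcomp Require Import all_boot all_order all_algebra.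
From mathcomp Require Import reals.
From mathcomp Require Import ring lra zify.
From Stdlib Require Import Classical.
Set Implicit Arguments. Unset Strict Implicit. Unset Printing Implicit Defensive.
Import Order.TTheory GRing.Theory Num.Theory.

(* Two segments are disjoint as soon as both endpoints of one lie strictly on the same
   side of the line through the other.  Segments sharing an endpoint are neither equal
   nor disjoint, so the diameter is at least 2.
   For n >= 9, the lines through two segments ab and cd sort the at least five other
   points into at most four classes of sides, so two of them, x and y, agree, and xy is
   disjoint from both segments.
   For n <= 8, two segments involve at most four points, which we extend to five points
   (n = 5) or six points (n >= 6).  The orientations of the triples of these points form
   a sign vector in which the terms of each three-term Grassmann-Pluecker relation and of
   each four-point relation [bcd] - [acd] + [abd] - [abc] = 0 do not all have the same
   sign.  An exhaustive search over such sign vectors, run by the VM, shows that the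
   same-side criterion alone joins the segments 01 and 02, and 01 and 23, by paths of
   length at most 4 (five points) or 3 (six points); up to relabelling, every pair of
   distinct segments is one of these two. *)

Lemma set2_eq (T : finType) (i j i' j' : T) :
  [set i'; j'] = [set i; j] -> (i' = i /\ j' = j) \/ (i' = j /\ j' = i).
Proof.
move=> E.
have : i' \in [set i; j] by rewrite -E !inE eqxx.
have : j' \in [set i; j] by rewrite -E !inE eqxx orbT.
have : i \in [set i'; j'] by rewrite E !inE eqxx.
have : j \in [set i'; j'] by rewrite E !inE eqxx orbT.
by rewrite !inE; do 4 case/orP=> /eqP ?; subst; auto.
Qed.

Lemma uniq4_sub (T : eqType) (i j k l : T) : uniq [:: i; j; k; l] ->
  [/\ i != j, k != l, uniq [:: i; j; k] & uniq [:: i; j; l]].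
Proof. by rewrite /= !inE !negb_or => /and4P[/and3P[-> -> ->] /andP[-> ->] -> _]. Qed.

Lemma segment_pair_cases (T : finType) (S U : {set T}) : #|S| = 2 -> #|U| = 2 ->
  [\/ S = U,
      exists a b c, uniq [:: a; b; c] /\ S = [set a; b] /\ U = [set a; c]
    | exists a b c d, uniq [:: a; b; c; d] /\ S = [set a; b] /\ U = [set c; d]].
Proof.
move=> /eqP/cards2P[a [b [ab ->]]] /eqP/cards2P[c [d [cd ->]]].
have uniq3 (x y z : T) : x != y -> x != z -> y != z -> uniq [:: x; y; z].
  by move=> xy xz yz; rewrite /= !inE negb_or xy xz yz.
have [?|ac] := eqVneq a c; first subst c.
  have [?|bd] := eqVneq b d; first by subst d; apply: Or31.
  by apply: Or32; exists a, b, d; rewrite uniq3.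
have [?|ad] := eqVneq a d; first subst d.
  have [?|bc] := eqVneq b c; first by subst c; apply: Or31; rewrite setUC.
  by apply: Or32; exists a, b, c; rewrite [[set c; a]]setUC uniq3 // eq_sym.
have [?|bc] := eqVneq b c; first subst c.
  by apply: Or32; exists b, a, d; rewrite [[set a; b]]setUC uniq3 // eq_sym.
have [?|bd] := eqVneq b d; first subst d.
  by apply: Or32; exists b, a, c; rewrite [[set a; b]]setUC [[set c; b]]setUC uniq3 // eq_sym.
apply: Or33; exists a, b, c, d; split=> //.
by rewrite /= !inE !negb_or ab ac ad bc bd cd.
Qed.

Lemma extend_injection n (x0 : 'I_n) (s : seq 'I_n) : uniq s ->
  exists2 f : nat -> 'I_n, {in gtn n &, injective f} & map f (iota 0 (size s)) = s.
Proof.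
move=> Us; pose L := s ++ [seq x <- enum 'I_n | x \notin s].
have UL : uniq L.
  rewrite cat_uniq Us filter_uniq ?enum_uniq // andbT.
  by apply/hasPn => x; rewrite mem_filter => /andP[].
have sizeL : n <= size L.
  rewrite -[n in n <= _]size_enum_ord; apply: uniq_leq_size (enum_uniq _) _ => x _.
  by rewrite mem_cat mem_filter mem_enum andbT orbN.
exists (nth x0 L).
  by move=> i j i_lt j_lt /eqP; rewrite nth_uniq ?(leq_trans _ sizeL) // => /eqP.
rewrite -[RHS](mkseq_nth x0) /mkseq; apply/eq_in_map => i; rewrite mem_iota => /andP[_ i_lt].
by rewrite nth_cat i_lt.
Qed.

Section Walks.
Variables (T : Type) (A : T -> T -> Prop).

Lemma dist_le_refl u k : dist_le A u u k.
Proof. by exists 0%N => //; apply: walk_nil. Qed.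

Lemma dist_le_cons u w v k : A u w -> dist_le A w v k -> dist_le A u v k.+1.
Proof. by move=> Auw [m mk W]; exists m.+1 => //; apply: walk_cons Auw W. Qed.

Lemma dist_le_mono u v k k' : dist_le A u v k -> (k <= k')%N -> dist_le A u v k'.
Proof. by case=> m mk W kk'; exists m => //; apply: leq_trans kk'. Qed.

Lemma dist_le1 u v : dist_le A u v 1 -> u = v \/ A u v.
Proof.
case=> -[|[|m]] // _ W; first by inversion W; left.
inversion W as [|x y z k Auy Wyv]; subst.
by inversion Wyv; subst; right.
Qed.

Lemma diameter_exists (V : T -> Prop) B :
  (forall u v, V u -> V v -> dist_le A u v B) ->
  (exists u v, [/\ V u, V v & ~ dist_le A u v 1]) ->
  exists2 d, (2 <= d <= B)%N & is_diameter V A d.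
Proof.
move=> close [u0 [v0 [Vu0 Vv0 far]]].
elim: B close => [|B IH] close.
  by case: far; apply: dist_le_mono (close _ _ Vu0 Vv0) _.
have [[u [v [Vu Vv uv]]]|] := classic (exists u v, [/\ V u, V v & ~ dist_le A u v B]).
  exists B.+1; last by split=> //; exists u, v.
  rewrite leqnn andbT ltnS lt0n; apply/eqP => B0; subst B.
  exact: far (close _ _ Vu0 Vv0).
move=> none; have [|d /andP[d2 dB] diam] := IH.
  by move=> u v Vu Vv; apply: NNPP => uv; apply: none; exists u, v.
by exists d; rewrite ?d2 ?(leq_trans dB).
Qed.

End Walks.

Section SignedSums.
Local Open Scope ring_scope.
Variable R : realDomainType.
Implicit Type s : seq R.

Lemma sum0_has_lt0 s : s != [::] ->
  all (fun x => x != 0) s -> \sum_(x <- s) x = 0 -> has (fun x => x < 0) s.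
Proof.
move=> s0 nz sum0; apply/negPn/negP; rewrite -all_predC => /allP nonneg.
have /allP all0 : all (fun x => (x \in s) ==> (x == 0)) s.
  by rewrite -psumr_eq0 -?big_seq ?sum0 // => x /nonneg; rewrite /= -leNgt.
case: s s0 nz {nonneg sum0} all0 => // x s _ /andP[x0 _] /(_ x (mem_head _ _)).
by rewrite mem_head (negbTE x0).
Qed.

Lemma sum0_mixed_signs s : s != [::] ->
  all (fun x => x != 0) s -> \sum_(x <- s) x = 0 ->
  has (fun x => x < 0) s && has (fun x => ~~ (x < 0)) s.
Proof.
move=> s0 nz sum0; rewrite sum0_has_lt0 //=.
have : has (fun x => x < 0) (map -%R s).
  apply: sum0_has_lt0; first by case: s s0 {nz sum0}.
    by rewrite all_map; apply: sub_all nz => x /=; rewrite oppr_eq0.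
  by rewrite big_map sumrN sum0 oppr0.
by rewrite has_map; apply: sub_has => x /=; rewrite oppr_lt0 => /ltW; rewrite leNgt.
Qed.

End SignedSums.

Section Orientation.
Local Open Scope ring_scope.
Variables (R : realType) (n : nat) (p : 'I_n -> R * R).
Hypothesis gp : general_position p.

Definition cw (i j k : 'I_n) : bool := det3 (p i) (p j) (p k) < 0.

Lemma det3_neq0 (i j k : 'I_n) : uniq [:: i; j; k] -> det3 (p i) (p j) (p k) != 0.
Proof. by rewrite /= !inE !negb_or => /and3P[/andP[ij ik] jk _]; apply: gp. Qed.

Lemma on_seg_det3 (i j : 'I_n) (u v x : R * R) : on_seg p [set i; j] x ->
  exists2 t : R, 0 <= t <= 1 & det3 u v x = (1 - t) * det3 u v (p i) + t * det3 u v (p j).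
Proof.
case=> i' [j' [E [t [t0 [t1 [e1 e2]]]]]].
have det3_x a b : x.1 = (1 - t) * a.1 + t * b.1 -> x.2 = (1 - t) * a.2 + t * b.2 ->
    det3 u v x = (1 - t) * det3 u v a + t * det3 u v b.
  by rewrite /det3 => -> ->; ring.
case: (set2_eq E) => -[??]; subst i' j'.
  by exists t; [rewrite t0 t1 | exact: det3_x].
exists (1 - t); first by apply/andP; split; lra.
by rewrite (det3_x _ _ e1 e2); ring.
Qed.

Lemma on_seg_line (i j : 'I_n) x : on_seg p [set i; j] x -> det3 (p i) (p j) x = 0.
Proof. by case/(on_seg_det3 (p i) (p j)) => t _ ->; rewrite /det3; ring. Qed.

Lemma on_seg_endpoint (i j : 'I_n) : on_seg p [set i; j] (p i).
Proof. by exists i, j; split=> //; exists 0; rewrite lexx ler01 subr0 !mul1r !mul0r !addr0. Qed.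

Lemma disj_adj_sym S T : disj_adj p S T -> disj_adj p T S.
Proof. by case=> hS [hT ST]; split=> //; split=> // -[x [xT xS]]; apply: ST; exists x. Qed.

(* A common point would have orientation 0 with respect to [i, j], yet it is a convex
   combination of [k] and [l], whose orientations are nonzero of the same sign. *)
Lemma disj_adj_same_side (i j k l : 'I_n) :
  uniq [:: i; j; k; l] -> cw i j k = cw i j l -> disj_adj p [set i; j] [set k; l].
Proof.
move=> U same.
have [ij kl /det3_neq0 Dk /det3_neq0 Dl] := uniq4_sub U.
split; first by rewrite /is_segment cards2 ij.
split; first by rewrite /is_segment cards2 kl.
case=> x [/on_seg_line x_line /(on_seg_det3 (p i) (p j))[t /andP[t0 t1]]].
rewrite x_line; move: same Dk Dl; rewrite /cw.
set A := det3 _ _ (p k); set B := det3 _ _ (p l) => same.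
rewrite !neq_lt => /orP[] hA /orP[] hB; move: same;
  rewrite ?hA ?hB ?(lt_gtF hA) ?(lt_gtF hB) // => _; nra.
Qed.

Lemma shared_endpoint_far (i j k : 'I_n) : uniq [:: i; j; k] ->
  ~ dist_le (disj_adj p) [set i; j] [set i; k] 1.
Proof.
rewrite /= !inE !negb_or => /and3P[/andP[ij ik] jk _] near.
case: (dist_le1 near) => [E|[_ [_]]].
  have : j \in [set i; k] by rewrite -E !inE eqxx orbT.
  by rewrite !inE eq_sym (negbTE ij) (negbTE jk).
by apply; exists (p i); split; apply: on_seg_endpoint.
Qed.

Lemma exists_far_segments : (2 < n)%N ->
  exists S T, [/\ is_segment S, is_segment T & ~ dist_le (disj_adj p) S T 1].
Proof.
move=> n3; pose i0 := Ordinal (ltnW (ltnW n3)); pose i1 := Ordinal (ltnW n3).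
exists [set i0; i1], [set i0; Ordinal n3].
by rewrite /is_segment !cards2; split=> //; apply: shared_endpoint_far.
Qed.

Lemma segments_dist_le2 S T : (9 <= n)%N -> is_segment S -> is_segment T ->
  dist_le (disj_adj p) S T 2.
Proof.
move=> n9 /eqP/cards2P[a [b [ab ->]]] /eqP/cards2P[c [d [cd ->]]].
pose X := ~: [set a; b; c; d].
pose sides x := (cw a b x, cw c d x).
have cardX : (4 < #|X|)%N.
  have : (#|[set a; b; c; d]| <= 4)%N.
    apply: leq_trans (card_size [:: a; b; c; d]).
    by apply: subset_leq_card; apply/subsetP => z; rewrite !inE -!orbA.
  by have := cardsC [set a; b; c; d]; rewrite card_ord -/X; lia.
have /dinjectivePn[x xX [y /andP[yx yX] same]] : ~~ dinjectiveb sides X.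
  apply/negP => /dinjectiveP/leq_card_in; rewrite card_prod card_bool.
  by apply/negP; rewrite -ltnNge.
case: same => eab ecd.
move: xX yX; rewrite !inE !negb_or.
move=> /andP[/andP[/andP[xa xb] xc] xd] /andP[/andP[/andP[ya yb] yc] yd].
rewrite eq_sym in yx.
apply: (@dist_le_cons _ _ _ [set x; y]); last apply: dist_le_cons (dist_le_refl _ _ _).
  apply: disj_adj_same_side eab.
  by rewrite /= !inE !negb_or yx ab !(eq_sym a) !(eq_sym b) xa xb ya yb.
apply: disj_adj_sym; apply: disj_adj_same_side ecd.
by rewrite /= !inE !negb_or yx cd !(eq_sym c) !(eq_sym d) xc xd yc yd.
Qed.

End Orientation.

Definition triples (m : nat) : seq (nat * nat * nat) :=
  flatten [seq [seq (x, y, z) | y <- iota 0 z, x <- iota 0 y] | z <- iota 0 m].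

Definition pairs (m : nat) : seq (nat * nat) := [seq (x, y) | y <- iota 0 m, x <- iota 0 y].

Fixpoint subsets (k : nat) (s : seq nat) : seq (seq nat) :=
  match k, s with
  | 0, _ => [:: [::]]
  | _.+1, [::] => [::]
  | k'.+1, x :: s' => [seq x :: t | t <- subsets k' s'] ++ subsets k s'
  end.

Lemma mem_triples m x y z : x < y -> y < z -> z < m -> (x, y, z) \in triples m.
Proof.
move=> xy yz zm; apply/flatten_mapP; exists z; first by rewrite mem_iota.
by apply/allpairsPdep; exists y, x; rewrite !mem_iota.
Qed.

Lemma mem_pairs m S : S \in pairs m -> S.1 < S.2 < m.
Proof. by case/allpairsPdep => y [x [ym xy ->]]; move: ym xy; rewrite !mem_iota /=; lia. Qed.

Lemma subsets_subseq k s t : t \in subsets k s -> subseq t s.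
Proof.
elim: s k t => [|x s IH] [|k] t; rewrite [subsets _ _]/=.
- by rewrite inE => /eqP->.
- by rewrite in_nil.
- by rewrite inE => /eqP->; apply: sub0seq.
rewrite mem_cat => /orP[/mapP[t' /IH t's ->]|/IH ts]; first by rewrite /= eqxx.
exact: subseq_trans ts (subseq_cons s x).
Qed.

(* The orientation of [a, b, c] is that of the sorted triple, flipped by the
   parity of the sorting permutation. *)
Definition sort3 (a b c : nat) : (nat * nat * nat) * bool :=
  if a < b then
    if b < c then ((a, b, c), false)
    else if a < c then ((a, c, b), true) else ((c, a, b), false)
  else
    if a < c then ((b, a, c), true)
    else if b < c then ((b, c, a), false) else ((c, b, a), true).

Lemma sort3_mem_triples m a b c : uniq [:: a; b; c] -> all (gtn m) [:: a; b; c] ->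
  (sort3 a b c).1 \in triples m.
Proof.
rewrite /= !inE !negb_or => /and3P[/andP[ab ac] bc _] /and4P[am bm cm _].
by rewrite /sort3; repeat case: ifPn => ?; apply: mem_triples; lia.
Qed.

(* A literal [(i, s)] stands for the orientation bit of the [i]-th sorted triple,
   negated when [s] holds; a term is the exclusive or of its literals. *)
Definition literal := (nat * bool)%type.
Definition term := seq literal.
Definition clause := seq term.

Definition lit (m a b c : nat) : literal :=
  let s := sort3 a b c in (index s.1 (triples m), s.2).
Definition neglit (x : literal) : literal := (x.1, ~~ x.2).

Definition lit_val (l : seq bool) (x : literal) : bool := nth false l x.1 (+) x.2.
Definition term_val (l : seq bool) (t : term) : bool :=
  foldr (fun x b => lit_val l x (+) b) false t.

(* For point sets, the terms of a clause are the signs of the summands of a vanishing sum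
   of nonzero reals, so they cannot all agree. *)
Definition sat (l : seq bool) (c : clause) : bool :=
  has (term_val l) c && has (predC (term_val l)) c.

Definition plucker_clause m a b c d e : clause :=
  [:: [:: lit m a b c; lit m a d e]; [:: neglit (lit m a b d); lit m a c e];
      [:: lit m a b e; lit m a c d]].

Definition four_point_clause m a b c d : clause :=
  [:: [:: lit m b c d]; [:: neglit (lit m a c d)]; [:: lit m a b d]; [:: neglit (lit m a b c)]].

Definition clauses_of m (q : seq nat) : seq clause :=
  if q is [:: a; b; c; d] then
    four_point_clause m a b c d :: [seq plucker_clause m e a b c d | e <- iota 0 m & e \notin q]
  else [::].

Definition clauses m : seq clause := flatten [seq clauses_of m q | q <- subsets 4 (iota 0 m)].

Lemma mem_clauses m cl : cl \in clauses m ->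
  (exists a b c d, [/\ uniq [:: a; b; c; d], all (gtn m) [:: a; b; c; d]
                      & cl = four_point_clause m a b c d]) \/
  (exists e a b c d, [/\ uniq [:: e; a; b; c; d], all (gtn m) [:: e; a; b; c; d]
                      & cl = plucker_clause m e a b c d]).
Proof.
case/flatten_mapP => q /subsets_subseq q_sub.
have Uq : uniq q := subseq_uniq q_sub (iota_uniq 0 m).
have q_lt : all (gtn m) q by apply/allP => x /(mem_subseq q_sub); rewrite mem_iota.
case: q q_sub Uq q_lt => [|a [|b [|c [|d [|? ?]]]]] // _ Uq q_lt.
rewrite /clauses_of inE => /orP[/eqP->|/mapP[e]]; first by left; exists a, b, c, d.
rewrite mem_filter mem_iota => /andP[e_notin /andP[_ em]] ->.
right; exists e, a, b, c, d; split=> //; first by rewrite cons_uniq e_notin Uq.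
by move: q_lt; rewrite /= em.
Qed.

Definition cmax (c : clause) : nat := foldr maxn 0 [seq foldr maxn 0 (unzip1 t) | t <- c].

Definition buckets m : seq (seq clause) :=
  [seq [seq c <- clauses m | cmax c == k] | k <- iota 0 (size (triples m))].

(* Backtracking over the bits of all sorted triples in order; after fixing bit [k]
   we check the clauses whose largest variable is [k]. *)
Fixpoint search (bk : seq (seq clause)) (leaf : seq bool -> bool) (k : nat)
    (pre : seq bool) : bool :=
  if k is k'.+1 then
    let branch b :=
      let l := rcons pre b in
      if all (sat l) (nth [::] bk (size pre)) then search bk leaf k' l else true in
    if branch true then branch false else false
  else leaf pre.

Lemma foldr_maxn_ge (s : seq nat) y : y \in s -> y <= foldr maxn 0 s.
Proof.
elim: s => //= x s IH; rewrite inE => /orP[/eqP->|ys]; first exact: leq_maxl.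
exact: leq_trans (IH ys) (leq_maxr _ _).
Qed.

Lemma sat_cat l s c : cmax c < size l -> sat (l ++ s) c = sat l c.
Proof.
move=> cl.
have term_val_cat : {in c, term_val (l ++ s) =1 term_val l}.
  move=> t tc; have small x : x \in t -> x.1 < size l.
    move=> xt; apply: leq_ltn_trans cl; apply: leq_trans (foldr_maxn_ge (map_f _ tc)).
    exact: foldr_maxn_ge (map_f _ xt).
  elim: t {tc} small => //= x t IH small.
  by rewrite IH => [|y yt]; rewrite ?small ?inE ?yt ?orbT // /lit_val nth_cat small ?mem_head.
by rewrite /sat (eq_in_has term_val_cat); congr (_ && _); apply: eq_in_has => t /term_val_cat /= ->.
Qed.

Lemma mem_buckets m k c : c \in nth [::] (buckets m) k -> c \in clauses m /\ cmax c = k.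
Proof.
have [km|km] := ltnP k (size (triples m)); last by rewrite nth_default ?size_map ?size_iota.
by rewrite (nth_map 0) ?size_iota // nth_iota // mem_filter => /andP[/eqP-> ->].
Qed.

Lemma search_cat m leaf pre s :
  search (buckets m) leaf (size s) pre -> all (sat (pre ++ s)) (clauses m) -> leaf (pre ++ s).
Proof.
elim: s pre => [|b s IH] pre /=; first by rewrite cats0.
move=> found sats; rewrite -cat_rcons; apply: IH; last by rewrite cat_rcons.
have bucket_ok : all (sat (rcons pre b)) (nth [::] (buckets m) (size pre)).
  apply/allP => c /mem_buckets[cC cmaxc].
  by rewrite -(sat_cat s) ?size_rcons ?cmaxc // cat_rcons (allP sats).
by move: found; case: b {sats} bucket_ok => ->; case: ifP.
Qed.

Lemma search_sound m leaf l : size l = size (triples m) -> all (sat l) (clauses m) ->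
  search (buckets m) leaf (size (triples m)) [::] -> leaf l.
Proof. by move=> <- sats found; apply: (search_cat found). Qed.

(* [has] with an explicit [if], so that call-by-value evaluation short-circuits. *)
Fixpoint has_lazy (T : Type) (f : T -> bool) (s : seq T) : bool :=
  if s is x :: s' then (if f x then true else has_lazy f s') else false.

Lemma has_lazyE (T : Type) (f : T -> bool) s : has_lazy f s = has f s.
Proof. by elim: s => //= x s ->; case: (f x). Qed.

Definition chi m (l : seq bool) a b c : bool := lit_val l (lit m a b c).

Definition adj m l (S U : nat * nat) : bool :=
  uniq [:: S.1; S.2; U.1; U.2] &&
  ((chi m l S.1 S.2 U.1 == chi m l S.1 S.2 U.2) || (chi m l U.1 U.2 S.1 == chi m l U.1 U.2 S.2)).

Fixpoint reach m l k (S T : nat * nat) : bool :=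
  if S == T then true else
  if k is k'.+1 then has_lazy (fun U => if adj m l S U then reach m l k' U T else false) (pairs m)
  else false.

Definition canonical_pairs_close m k l : bool :=
  if reach m l k (0, 1) (0, 2) then reach m l k (0, 1) (2, 3) else false.

Lemma search5 : search (buckets 5) (canonical_pairs_close 5 4) (size (triples 5)) [::].
Proof. vm_cast_no_check (erefl true). Qed.

Lemma search6 : search (buckets 6) (canonical_pairs_close 6 3) (size (triples 6)) [::].
Proof. vm_cast_no_check (erefl true). Qed.

Section Realization.
Variables (R : realType) (n : nat) (p : 'I_n -> R * R) (m : nat) (f : nat -> 'I_n).
Hypotheses (gp : general_position p) (f_inj : {in gtn m &, injective f}).
Local Open Scope ring_scope.

Lemma sort3_det3 (g : nat -> R * R) a b c :
  let s := sort3 a b c in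
  det3 (g a) (g b) (g c) = (-1) ^+ s.2 * det3 (g s.1.1.1) (g s.1.1.2) (g s.1.2).
Proof. by rewrite /sort3; repeat case: ifP => _; rewrite /det3 /=; ring. Qed.

Definition realized_bits : seq bool := [seq cw p (f t.1.1) (f t.1.2) (f t.2) | t <- triples m].

Definition lit_real (x : literal) : R :=
  let: (a, b, c) := nth (0, 0, 0)%N (triples m) x.1 in
  (-1) ^+ x.2 * det3 (p (f a)) (p (f b)) (p (f c)).

Definition valid_lit (x : literal) : bool := (x.1 < size (triples m))%N && (lit_real x != 0).

Lemma uniq_map_below s : all (gtn m) s -> uniq s -> uniq (map f s).
Proof. by move=> /allP sm; rewrite map_inj_in_uniq // => x y /sm xm /sm ym; apply: f_inj. Qed.

Lemma lit_realE a b c : uniq [:: a; b; c] -> all (gtn m) [:: a; b; c] ->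
  lit_real (lit m a b c) = det3 (p (f a)) (p (f b)) (p (f c)).
Proof.
move=> U am; have := sort3_mem_triples U am; have := sort3_det3 (fun i => p (f i)) a b c.
rewrite /lit_real /lit /=; case: (sort3 a b c) => [[[x y] z] s] /= -> t_in.
by rewrite nth_index.
Qed.

Lemma valid_lit_lit a b c : uniq [:: a; b; c] -> all (gtn m) [:: a; b; c] ->
  valid_lit (lit m a b c).
Proof.
move=> U am; rewrite /valid_lit lit_realE // (det3_neq0 gp (uniq_map_below am U)).
by rewrite index_mem sort3_mem_triples.
Qed.

Lemma lit_real_neg x : lit_real (neglit x) = - lit_real x.
Proof. by rewrite /lit_real /=; case: nth => [[a b] c]; rewrite signrN mulNr. Qed.

Lemma valid_lit_neg x : valid_lit (neglit x) = valid_lit x.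
Proof. by rewrite /valid_lit lit_real_neg oppr_eq0. Qed.

Lemma lit_val_realized x : valid_lit x -> lit_val realized_bits x = (lit_real x < 0).
Proof.
case/andP=> xlt; rewrite /lit_val /lit_real (nth_map (0, 0, 0)%N) //.
case: nth => [[a b] c] /=; rewrite mulf_eq0 signr_eq0 /= => D.
by rewrite mulr_lt0 signr_eq0 D signr_lt0 addbC.
Qed.

Lemma term_val_realized t : all valid_lit t ->
  term_val realized_bits t = (\prod_(x <- t) lit_real x < 0).
Proof.
elim: t => [|x t IH] /=; first by rewrite big_nil ltNge ler01.
case/andP=> vx vt; rewrite big_cons IH // lit_val_realized // mulr_lt0.
have -> : \prod_(y <- t) lit_real y != 0.
  by rewrite prodf_seq_neq0; apply: sub_all vt => y /andP[].
by case/andP: vx => _ ->.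
Qed.

Lemma sat_realized c : c != [::] -> all (all valid_lit) c ->
  \sum_(t <- c) \prod_(x <- t) lit_real x = 0 -> sat realized_bits c.
Proof.
move=> c0 valid sum0; pose vals := [seq \prod_(x <- t) lit_real x | t <- c].
have vals0 : vals != [::] by rewrite -size_eq0 size_map size_eq0.
have vals_nz : all (fun x => x != 0) vals.
  rewrite all_map; apply: sub_all valid => t /= vt.
  by rewrite prodf_seq_neq0; apply: sub_all vt => y /andP[].
have := sum0_mixed_signs vals0 vals_nz.
rewrite big_map !has_map => /(_ sum0) /andP[neg nonneg].
have term_valE : {in c, term_val realized_bits =1 fun t => \prod_(x <- t) lit_real x < 0}.
  by move=> t /(allP valid) /term_val_realized.
rewrite /sat (eq_in_has term_valE) neg.
rewrite (eq_in_has (a2 := fun t => ~~ (\prod_(x <- t) lit_real x < 0))); first exact: nonneg.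
by move=> t /term_valE /= ->.
Qed.

Lemma all_sat_realized : all (sat realized_bits) (clauses m).
Proof.
apply/allP => cl /mem_clauses[[a [b [c [d [U am ->]]]]] | [e [a [b [c [d [U am ->]]]]]]];
  move: (U) (am); rewrite /= !inE => U' am'; apply: sat_realized => //=.
- by rewrite !valid_lit_neg !valid_lit_lit //= ?inE; lia.
- rewrite !big_cons !big_nil !lit_real_neg !lit_realE /= ?inE; try lia.
  by rewrite /det3; ring.
- by rewrite !valid_lit_neg !valid_lit_lit //= ?inE; lia.
- rewrite !big_cons !big_nil !lit_real_neg !lit_realE /= ?inE; try lia.
  by rewrite /det3; ring.
Qed.

Lemma chi_realized a b c : uniq [:: a; b; c] -> all (gtn m) [:: a; b; c] ->
  chi m realized_bits a b c = cw p (f a) (f b) (f c).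
Proof. by move=> U am; rewrite /chi lit_val_realized ?valid_lit_lit // lit_realE. Qed.

Definition seg (S : nat * nat) : {set 'I_n} := [set f S.1; f S.2].

Lemma adj_realized S T : all (gtn m) [:: S.1; S.2; T.1; T.2] ->
  adj m realized_bits S T -> disj_adj p (seg S) (seg T).
Proof.
move=> lt /andP[U same]; move: (lt) (U); rewrite /= !inE => lt' U'.
case/orP: same => /eqP same.
  apply: (disj_adj_same_side gp (uniq_map_below lt U)).
  by rewrite -!chi_realized //= ?inE; lia.
apply: disj_adj_sym; apply: (disj_adj_same_side gp).
  by apply: (uniq_map_below (s := [:: T.1; T.2; S.1; S.2])); rewrite /= ?inE; lia.
by rewrite -!chi_realized //= ?inE; lia.
Qed.

Lemma reach_realized k S T : (S.1 < m)%N -> (S.2 < m)%N ->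
  reach m realized_bits k S T -> dist_le (disj_adj p) (seg S) (seg T) k.
Proof.
elim: k S => [|k IH] S s1 s2 /=; first by case: eqP => // -> _; apply: dist_le_refl.
case: eqP => [-> _|_]; first exact: dist_le_refl.
rewrite has_lazyE => /hasP[U /mem_pairs /andP[u12 u2]].
case: ifP => // SU /IH; move=> /(_ (ltn_trans u12 u2) u2); apply: dist_le_cons.
by apply: adj_realized SU; rewrite /= s1 s2 u2 (ltn_trans u12 u2).
Qed.

Lemma canonical_pairs_realized k : (3 < m)%N ->
  canonical_pairs_close m k realized_bits ->
  dist_le (disj_adj p) (seg (0, 1)%N) (seg (0, 2)%N) k /\
  dist_le (disj_adj p) (seg (0, 1)%N) (seg (2, 3)%N) k.
Proof.
move=> m3; rewrite /canonical_pairs_close.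
by case: ifP => // close02 close23; split; apply: reach_realized => //=; lia.
Qed.

End Realization.

Lemma canonical_pairs_dist (R : realType) n (p : 'I_n -> R * R) m k (f : nat -> 'I_n) :
  general_position p -> {in gtn m &, injective f} -> (m = 5 /\ k = 4) \/ (m = 6 /\ k = 3) ->
  dist_le (disj_adj p) [set f 0; f 1] [set f 0; f 2] k /\
  dist_le (disj_adj p) [set f 0; f 1] [set f 2; f 3] k.
Proof.
move=> gp f_inj mk.
have m3 : 3 < m by case: mk => -[-> _].
have found : search (buckets m) (canonical_pairs_close m k) (size (triples m)) [::].
  by case: mk => -[-> ->]; [exact: search5 | exact: search6].
apply: (canonical_pairs_realized gp f_inj m3).
by apply: search_sound found; [exact: size_map | exact: all_sat_realized].
Qed.

Lemma segments_dist_small (R : realType) n (p : 'I_n -> R * R) S T :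
  5 <= n <= 8 -> general_position p -> is_segment S -> is_segment T ->
  dist_le (disj_adj p) S T (if n == 5 then 4 else 3).
Proof.
move=> n58 gp hS hT; pose m := if n == 5 then 5 else 6.
have mk : (m = 5 /\ (if n == 5 then 4 else 3) = 4) \/ (m = 6 /\ (if n == 5 then 4 else 3) = 3).
  by rewrite /m; case: (n == 5); [left | right].
have n0 : 0 < n by lia.
have embed (s : seq 'I_n) : uniq s ->
    exists2 f : nat -> 'I_n, {in gtn m &, injective f} & map f (iota 0 (size s)) = s.
  move=> Us; have [f f_inj fs] := extend_injection (Ordinal n0) Us.
  exists f => //; apply: sub_in2 f_inj => i; rewrite !inE => im.
  by apply: leq_trans im _; rewrite /m; case: eqP; lia.
case: (segment_pair_cases hS hT) => [->|[a [b [c [U [-> ->]]]]]|[a [b [c [d [U [-> ->]]]]]]].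
- exact: dist_le_refl.
- have [f f_inj [<- <- <-]] := embed _ U.
  exact: (canonical_pairs_dist gp f_inj mk).1.
- have [f f_inj [<- <- <- <-]] := embed _ U.
  exact: (canonical_pairs_dist gp f_inj mk).2.
Qed.

Theorem theorem1 (R : realType) (n : nat) (p : 'I_n -> R * R) :
  (5 <= n)%N -> injective p -> general_position p ->
  exists d : nat,
    is_diameter (@is_segment n) (disj_adj p) d /\
    (n = 5%N -> d \in [:: 2; 3; 4]%N) /\
    ((6 <= n <= 8)%N -> d \in [:: 2; 3]%N) /\
    ((9 <= n)%N -> d = 2%N).
Proof.
move=> n5 _ gp.
pose B := if n <= 8 then (if n == 5 then 4 else 3) else 2.
have close S T : is_segment S -> is_segment T -> dist_le (disj_adj p) S T B.
  rewrite /B; case: leqP => [n8|n9]; last exact: segments_dist_le2.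
  by apply: segments_dist_small; rewrite ?n5.
have far := exists_far_segments p (leq_trans (isT : 2 < 5) n5).
have [d /andP[d2 dB] diam] := diameter_exists close far.
exists d; split=> //; move: dB; rewrite /B.
by case: (leqP n 8) => ?; case: (n =P 5) => ? dB; rewrite !inE; do 2?split; move=> ?; lia.
Qed.
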